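(* Fix $\epsilon>0$, a function $A:(2\pi,\infty)\to[0,\infty)$ and a function $B:\{(\beta_L,\beta_R)\in(0,\infty)^2:\beta_L\beta_R>4\pi^2\}\to[0,\infty)$. Consider the class $\mathcal{C}$ of all unitary, modular invariant 2D CFT spectra (any central charge $c\geqslant0$) with a normalizable vacuum ($n_{0,0}\geqslant1$) satisfying $$\sum_{h+\bar h\leqslant\frac c{12}+\epsilon}n_{h,\bar h}e^{-(h+\bar h)\beta}\leqslant A(\beta)\ \ (\beta>2\pi),\qquad \sum_{\min(h,\bar h)\leqslant\frac{c}{24}}n_{h,\bar h}e^{-h\beta_L-\bar h\beta_R}\leqslant B(\beta_L,\beta_R)\ \ (\beta_L\beta_R>4\pi^2).$$ Then for each $(\beta_L,\beta_R)$ with $\beta_L\beta_R\neq4\pi^2$ there is a constant $K<\infty$, independent of the theory in $\mathcal{C}$ and of $c$, such that every theory in $\mathcal{C}$ satisfies $$\left|\log Z(\beta_L,\beta_R)-\tfrac c{24}(\beta_L+\beta_R)\right|\leqslant K\ \text{ if }\beta_L\beta_R>4\pi^2,\qquad \left|\log Z(\beta_L,\beta_R)-\tfrac{\pi^2c}{6}\left(\tfrac1{\beta_L}+\tfrac1{\beta_R}\right)\right|\leqslant K\ \text{ if }\beta_L\beta_R<4\pi^2.$$ That is, as $c\to\infty$ with $\beta_L,\beta_R$ fixed, the free energy equals the thermal AdS value $\frac c{24}(\beta_L+\beta_R)+O(1)$ for $\beta_L\beta_R>4\pi^2$ and the BTZ value $\frac{\pi^2c}{6}(\frac1{\beta_L}+\frac1{\beta_R})+O(1)$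 for $\beta_L\beta_R<4\pi^2$.
   Context: A unitary, modular invariant 2D CFT spectrum consists of a real number $c\geqslant0$ (central charge) and a countable collection of pairs $(h,\bar h)$ with $h,\bar h\geqslant0$, each with multiplicity $n_{h,\bar h}\in\mathbb{N}$, such that $Z(\beta_L,\beta_R)=\sum_{h,\bar h}n_{h,\bar h}e^{-(h-\frac c{24})\beta_L-(\bar h-\frac c{24})\beta_R}$ is finite for all $\beta_L,\beta_R>0$ and $Z(\beta_L,\beta_R)=Z(4\pi^2/\beta_L,4\pi^2/\beta_R)$. (This statement is posed as a conjecture of Hartman–Keller–Stoica and is proved in the paper.) *)

From HB Require Import structures.
From mathcomp Require Import all_boot all_order all_algebra.
From mathcomp Require Import all_classical all_reals all_analysis.
Set Implicit Arguments. Unset Strict Implicit. Unset Printing Implicit Defensive.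
Import Order.TTheory GRing.Theory Num.Theory.
Local Open Scope classical_set_scope.
Local Open Scope ring_scope.

Section CFT.
Variable R : realType.

(* A candidate 2D CFT spectrum: a central charge and a multiplicity function
   n_{h,hbar} on pairs (h,hbar) (zero off the spectrum). *)
Record spectrum := Spectrum {
  cc : R;
  mult : R -> R -> nat
}.

Definition support (S : spectrum) : set (R * R) :=
  [set p | (mult S p.1 p.2 > 0)%N].

Definition Zpart (S : spectrum) (bL bR : R) : \bar R :=
  \esum_(p in support S)
    ((mult S p.1 p.2)%:R * expR (- (p.1 - cc S / 24) * bL - (p.2 - cc S / 24) * bR))%:E.

Definition is_CFT_spectrum (S : spectrum) : Prop :=
  [/\ 0 <= cc S,
      countable (support S),
      (forall p, support S p -> 0 <= p.1 /\ 0 <= p.2),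
      (forall bL bR, 0 < bL -> 0 < bR -> (Zpart S bL bR < +oo)%E) &
      (forall bL bR, 0 < bL -> 0 < bR ->
         Zpart S bL bR = Zpart S (4 * pi ^+ 2 / bL) (4 * pi ^+ 2 / bR))].

Definition has_vacuum (S : spectrum) : Prop := (1 <= mult S 0 0)%N.

Definition light_sum (S : spectrum) (eps beta : R) : \bar R :=
  \esum_(p in [set p | support S p /\ p.1 + p.2 <= cc S / 12 + eps])
    ((mult S p.1 p.2)%:R * expR (- (p.1 + p.2) * beta))%:E.

Definition twist_sum (S : spectrum) (bL bR : R) : \bar R :=
  \esum_(p in [set p | support S p /\ Num.min p.1 p.2 <= cc S / 24])
    ((mult S p.1 p.2)%:R * expR (- p.1 * bL - p.2 * bR))%:E.

(* log Z as a real number (Z is finite and positive for the theories considered) *)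
Definition logZ (S : spectrum) (bL bR : R) : R := ln (fine (Zpart S bL bR)).

End CFT.

(* For b_L b_R > 4 pi^2 the vacuum alone gives Z >= e^{c (b_L + b_R)/24}.  For the
   upper bound, split Z(u, v) into the states with min(h, hb) <= c/24, which the
   twist bound controls, and the others, whose weights only grow when (u, v) is
   lowered to (4 pi^2/a, 4 pi^2/b); by modular invariance this part is at most
   Z(a, b).  Taking (a, b) = (4 pi^2/u, u + v - 4 pi^2/u), with u the smaller
   entry, keeps u + v fixed and multiplies the excess u v - 4 pi^2 by
   4 pi^2/u^2, which exceeds (u + v)^2/(16 pi^2) > 1 as long as
   u (u + v) < 8 pi^2.  Hence after finitely many steps, depending only on
   (b_L, b_R), both entries are at least 8 pi^2/(b_L + b_R), and a last step
   lands on the diagonal point g = (b_L + b_R)/2 > 2 pi, where the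
   Hartman-Keller-Stoica argument bounds Z(g, g) by
   e^{c g/12} A(g) / (1 - e^{-eps (g - 4 pi^2/g)}).  The regime
   b_L b_R < 4 pi^2 is the modular image of the first one. *)

From Pilot Require Import Defs.
From HB Require Import structures.
From mathcomp Require Import all_boot all_order all_algebra.
From mathcomp Require Import all_classical all_reals all_analysis.
From mathcomp Require Import ring lra.
Set Implicit Arguments. Unset Strict Implicit. Unset Printing Implicit Defensive.
Import Order.TTheory GRing.Theory Num.Theory.
Local Open Scope classical_set_scope.
Local Open Scope ring_scope.

Section NonnegEsum.
Variables (R : realType) (T : choiceType).
Implicit Types (I J : set T) (a : T -> \bar R).

Lemma esum_subset_le I J a : I `<=` J -> (forall t, J t -> (0 <= a t)%E) ->
  (\esum_(t in I) a t <= \esum_(t in J) a t)%E.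
Proof.
move=> IJ a0; rewrite (esumID I J) // (setIidr IJ).
by apply: leeDl; apply: esum_ge0 => t [/a0].
Qed.

Lemma term_le_esum I a t : I t -> (forall t, I t -> (0 <= a t)%E) ->
  (a t <= \esum_(i in I) a i)%E.
Proof. by move=> It a0; rewrite -esum_set1 ?a0 //; apply: esum_subset_le => // ? ->. Qed.

Lemma esumZl_le I a (r : R) : 0 <= r -> (forall t, (0 <= a t)%E) ->
  (\esum_(t in I) (r%:E * a t) <= r%:E * \esum_(t in I) a t)%E.
Proof.
move=> r0 a0; apply: ge_ereal_sup => _ [X XI <-].
rewrite -ge0_mule_fsumr //; apply: lee_wpmul2l; first by rewrite lee_fin.
by apply: ereal_sup_ubound; exists X.
Qed.
End NonnegEsum.

Lemma abs_ln_sub_le (R : realType) (x z K : R) :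
  expR x <= z -> z <= expR x * K -> `|ln z - x| <= ln K.
Proof.
move=> lo up; have z0 : 0 < z := lt_le_trans (expR_gt0 x) lo.
have K0 : 0 < K by rewrite -(pmulr_rgt0 _ (expR_gt0 x)) (lt_le_trans z0).
have K1 : 1 <= K by rewrite -(ler_pM2l (expR_gt0 x)) mulr1 (le_trans lo).
have lnK0 : 0 <= ln K by rewrite -ler_expR expR0 lnK ?posrE.
have lnz : x <= ln z by rewrite -ler_expR lnK ?posrE.
have : ln z <= ln (expR x * K) by rewrite ler_ln ?posrE ?mulr_gt0 ?expR_gt0.
by rewrite lnM ?posrE ?expR_gt0 // expRK ler_norml => ?; apply/andP; split; lra.
Qed.

Section Rebalance.
Variables (R : archiRealFieldType) (c : R).
Hypothesis c_gt0 : 0 < c.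

Definition above (P : R * R) : Prop := [/\ 0 < P.1, 0 < P.2 & c < P.1 * P.2].

Definition excess (P : R * R) : R := P.1 * P.2 - c.

Definition balanced (P : R * R) : bool :=
  (2 * c <= (P.1 + P.2) * P.1) && (2 * c <= (P.1 + P.2) * P.2).

Definition rebalance (P : R * R) : R * R :=
  if P.1 <= P.2 then (c / P.1, P.1 + P.2 - c / P.1)
  else (P.1 + P.2 - c / P.2, c / P.2).

Lemma invert_fst_excess (u v : R) : u != 0 ->
  excess (c / u, u + v - c / u) * u ^+ 2 = c * excess (u, v).
Proof. by move=> u0; rewrite /excess /=; field. Qed.

Lemma invert_fst_above (u v : R) : above (u, v) ->
  [/\ above (c / u, u + v - c / u), c / (c / u) = u & c / (u + v - c / u) <= v].
Proof.
case=> /= u0 v0 uv; have w0 : 0 < c / u by rewrite divr_gt0.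
have wv : c / u < v by rewrite ltr_pdivrMr // mulrC.
have b0 : 0 < u + v - c / u by lra.
split; last by rewrite ler_pdivrMr //; nra.
- split => //=; rewrite -subr_gt0 -[_ - c]/(excess (c / u, _)).
  rewrite -(pmulr_lgt0 _ (exprn_gt0 2 u0)) invert_fst_excess ?gt_eqF //.
  by rewrite mulr_gt0 // subr_gt0.
- by rewrite invf_div mulrC divfK ?gt_eqF.
Qed.

Lemma rebalance_sum (P : R * R) : (rebalance P).1 + (rebalance P).2 = P.1 + P.2.
Proof. by rewrite /rebalance; case: ifP => _ /=; rewrite ?subrK // addrC subrK. Qed.

Lemma rebalance_above (P : R * R) : above P ->
  [/\ above (rebalance P), c / (rebalance P).1 <= P.1 & c / (rebalance P).2 <= P.2].
Proof.
case: P => u v hP; rewrite /rebalance /=; case: ifP => _.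
  by have [? -> ?] := invert_fst_above hP.
have [[/= w0 b0 wb] -> vb] : [/\ above (c / v, v + u - c / v), c / (c / v) = v
                            & c / (v + u - c / v) <= u].
  by apply: invert_fst_above; case: hP => /= *; split; rewrite // mulrC.
by rewrite (addrC u v); split => //; split; rewrite // mulrC.
Qed.

Lemma rebalance_excess (P : R * R) : above P -> ~~ balanced P ->
  (P.1 + P.2) ^+ 2 * excess P <= 4 * c * excess (rebalance P).
Proof.
case: P => u v hP; have [/= u0 v0 uv] := hP; rewrite /balanced /rebalance /=.
have key (x y : R) : 0 < x -> x <= y -> c < x * y -> (x + y) * x < 2 * c ->
    (x + y) ^+ 2 * excess (x, y) <= 4 * c * excess (c / x, x + y - c / x).
  move=> x0 xy cxy lt2c; rewrite -(ler_pM2r (exprn_gt0 2 x0)).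
  have e0 : 0 <= excess (x, y) by rewrite /excess subr_ge0 ltW.
  have -> : 4 * c * excess (c / x, x + y - c / x) * x ^+ 2
            = (2 * c) ^+ 2 * excess (x, y).
    by rewrite -mulrA invert_fst_excess ?gt_eqF //; ring.
  have -> : (x + y) ^+ 2 * excess (x, y) * x ^+ 2
            = ((x + y) * x) ^+ 2 * excess (x, y) by ring.
  by apply: ler_wpM2r => //; rewrite !expr2; nra.
case: ifP => uv_le unbal.
  apply: key => //; rewrite ltNge; apply: contra unbal => h.
  by rewrite h (le_trans h) // ler_wpM2l //; nra.
have -> : excess (u + v - c / v, c / v) = excess (c / v, v + u - c / v).
  by rewrite /excess mulrC (addrC u).
have -> : excess (u, v) = excess (v, u) by rewrite /excess mulrC.
rewrite (addrC u v).
apply: key => //; first by rewrite ltW // ltNge uv_le.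
- by rewrite mulrC.
rewrite ltNge; apply: contra unbal => h.
by rewrite addrC h andbT (le_trans h) // ler_wpM2l; nra.
Qed.

Lemma excess_le_sum (P : R * R) : 4 * excess P <= (P.1 + P.2) ^+ 2 - 4 * c.
Proof. by rewrite /excess; have := sqr_ge0 (P.1 - P.2); rewrite sqrrB sqrrD; lra. Qed.

Lemma iter_rebalance_sum (P : R * R) n :
  (iter n rebalance P).1 + (iter n rebalance P).2 = P.1 + P.2.
Proof. by elim: n => //= n <-; exact: rebalance_sum. Qed.

Lemma iter_rebalance_above (P : R * R) n : above P -> above (iter n rebalance P).
Proof. by move=> hP; elim: n => //= n /rebalance_above[]. Qed.

Lemma rebalance_eventually_balanced (P : R * R) : above P ->
  exists N, balanced (iter N rebalance P).
Proof.
move=> hP; apply: contrapT => /forallNP unbal.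
pose s := P.1 + P.2; pose e n := excess (iter n rebalance P).
have e0_gt0 : 0 < e 0 by case: hP => _ _; rewrite /e /excess subr_gt0.
have s2 : 4 * c < s ^+ 2 by have := excess_le_sum P; rewrite -/s -/(e 0); lra.
pose D := (s ^+ 2 - 4 * c) * e 0.
have D_gt0 : 0 < D by rewrite mulr_gt0 // subr_gt0.
have grow n : 4 * c * e 0 + n%:R * D <= 4 * c * e n.
  elim: n => [|n IH]; first by rewrite mul0r addr0.
  have := rebalance_excess (iter_rebalance_above n hP) (introN idP (unbal n)).
  rewrite iter_rebalance_sum -/s -/(e n) -/(e n.+1) => step.
  have : e 0 <= e n.
    rewrite -(ler_pM2l (_ : 0 < 4 * c)) ?mulr_gt0 //.
    by have := mulr_ge0 (ler0n R n) (ltW D_gt0); lra.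
  rewrite -subr_ge0 => en_ge; have s2' : 0 < s ^+ 2 - 4 * c by rewrite subr_gt0.
  have := mulr_ge0 (ltW s2') en_ge.
  by move: IH; rewrite -(@natr1 R n) /D; lra.
have bounded n : 4 * c * e n <= c * s ^+ 2.
  have := excess_le_sum (iter n rebalance P); rewrite iter_rebalance_sum -/s -/(e n).
  rewrite [4 * c]mulrC -mulrA ler_pM2l // => /le_trans; apply.
  by rewrite lerBlDr lerDl mulr_ge0 // ltW.
have s2_gt0 : 0 < s ^+ 2 by apply: lt_trans s2; rewrite mulr_gt0.
have := archi_boundP (ltW (divr_gt0 (mulr_gt0 c_gt0 s2_gt0) D_gt0)).
rewrite ltr_pdivrMr //; set n := Num.Def.archi_bound _ => nD.
have := grow n; have := bounded n; have := mulr_gt0 c_gt0 e0_gt0; lra.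
Qed.

Lemma balanced_half_sum (P : R * R) : above P -> balanced P ->
  [/\ c < ((P.1 + P.2) / 2) ^+ 2, c / ((P.1 + P.2) / 2) <= P.1
    & c / ((P.1 + P.2) / 2) <= P.2].
Proof.
case=> u0 v0 uv /andP[b1 b2]; have := excess_le_sum P; rewrite /excess => am.
have g0 : 0 < (P.1 + P.2) / 2 by rewrite divr_gt0 ?addr_gt0.
split; last 2 first.
- by rewrite ler_pdivrMr // mulrA ler_pdivlMr //; lra.
- by rewrite ler_pdivrMr // mulrA ler_pdivlMr //; lra.
by rewrite expr_div_n ltr_pdivlMr ?exprn_gt0 //; lra.
Qed.
End Rebalance.

Lemma four_pi2_gt0 (R : realType) : 0 < 4 * pi ^+ 2 :> R.
Proof. by rewrite mulr_gt0 // exprn_gt0 // pi_gt0. Qed.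

Section Partition.
Variables (R : realType) (S : spectrum R).

(* [Zpart S bL bR] is convertible to [\esum_(p in support S) (Zterm bL bR p)%:E]. *)
Definition Zterm (bL bR : R) (p : R * R) : R :=
  (mult S p.1 p.2)%:R * expR (- (p.1 - cc S / 24) * bL - (p.2 - cc S / 24) * bR).

Lemma Zterm_ge0 bL bR p : 0 <= Zterm bL bR p.
Proof. by rewrite mulr_ge0 ?expR_ge0. Qed.

Lemma ZtermE bL bR p : Zterm bL bR p =
  expR (cc S / 24 * (bL + bR)) * ((mult S p.1 p.2)%:R * expR (- p.1 * bL - p.2 * bR)).
Proof. by rewrite mulrCA -expRD /Zterm; congr (_ * expR _); ring. Qed.

Lemma Zterm_diag g p :
  Zterm g g p = (mult S p.1 p.2)%:R * expR (- (p.1 + p.2 - cc S / 12) * g).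
Proof. by rewrite /Zterm; congr (_ * expR _); field. Qed.

Lemma Zpart_split_le (Q : set (R * R)) (k u v a b : R) : 0 <= k ->
    (forall p, Defs.support S p -> ~ Q p -> Zterm u v p <= k * Zterm a b p) ->
  (Zpart S u v <= \esum_(p in Defs.support S `&` Q) (Zterm u v p)%:E
                  + k%:E * Zpart S a b)%E.
Proof.
move=> k0 heavy; rewrite /Zpart (esumID Q); last by move=> p _; rewrite lee_fin Zterm_ge0.
apply: leeD => //.
apply: (@le_trans _ _ (\esum_(p in Defs.support S `&` ~` Q) (k%:E * (Zterm a b p)%:E)%E)).
  by apply: le_esum => p [Sp nQp]; rewrite -EFinM lee_fin heavy.
apply: le_trans (esumZl_le _ k0 _) _ => [p|]; first by rewrite lee_fin Zterm_ge0.
apply: lee_wpmul2l; first by rewrite lee_fin.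
by apply: esum_subset_le => [p []|p _]; rewrite // lee_fin Zterm_ge0.
Qed.

Lemma Zpart_ge_vacuum bL bR : has_vacuum S ->
  ((expR (cc S / 24 * (bL + bR)))%:E <= Zpart S bL bR)%E.
Proof.
move=> vac.
apply: le_trans (@term_le_esum _ _ _ (fun p => (Zterm bL bR p)%:E) (0, 0) vac _).
  rewrite lee_fin -[X in X <= _]mul1r ler_pM ?ler1n ?expR_ge0 //.
  by rewrite ler_expR /=; lra.
by move=> p _; rewrite lee_fin Zterm_ge0.
Qed.

Hypothesis HS : is_CFT_spectrum S.

Lemma Zpart_fin_num bL bR : 0 < bL -> 0 < bR -> Zpart S bL bR \is a fin_num.
Proof.
case: HS => _ _ _ fin _ bL0 bR0; rewrite ge0_fin_numE ?fin //.
by apply: esum_ge0 => p _; rewrite lee_fin Zterm_ge0.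
Qed.

Lemma Zpart_modularE a b : 0 < a -> 0 < b ->
  Zpart S (4 * pi ^+ 2 / a) (4 * pi ^+ 2 / b) = Zpart S a b.
Proof. by case: HS => _ _ _ _ modi a0 b0; rewrite [RHS]modi. Qed.

Lemma Zpart_le_twist u v a b : 0 < a -> 0 < b ->
    4 * pi ^+ 2 / a <= u -> 4 * pi ^+ 2 / b <= v ->
  (Zpart S u v <= (expR (cc S / 24 * (u + v)))%:E * twist_sum S u v + Zpart S a b)%E.
Proof.
move=> a0 b0; rewrite -(subr_ge0 _ u) -(subr_ge0 _ v) => au bv.
rewrite -(Zpart_modularE a0 b0) -[X in (_ <= _ + X)%E]mul1e.
apply: le_trans (Zpart_split_le (Q := [set p | Num.min p.1 p.2 <= cc S / 24])
  (a := 4 * pi ^+ 2 / a) (b := 4 * pi ^+ 2 / b) ler01 _) _.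
  move=> p _ /negP; rewrite -ltNge lt_min => /andP[h1 h2].
  rewrite mul1r ler_wpM2l // ler_expR.
  have k1 : 0 <= p.1 - cc S / 24 by rewrite subr_ge0 ltW.
  have k2 : 0 <= p.2 - cc S / 24 by rewrite subr_ge0 ltW.
  have := mulr_ge0 k1 (au : 0 <= u - _); have := mulr_ge0 k2 (bv : 0 <= v - _).
  lra.
apply: leeD => //; apply: le_trans (esumZl_le _ (expR_ge0 _) _) => [|p]; last first.
  by rewrite lee_fin mulr_ge0 ?expR_ge0.
by apply: le_esum => p _; rewrite ZtermE EFinM.
Qed.

Lemma Zpart_le_light eps g : 0 < eps -> 2 * pi < g ->
  (Zpart S g g <= (expR (cc S / 24 * (g + g)))%:E * light_sum S eps g
                  + (expR (- eps * (g - 4 * pi ^+ 2 / g)))%:E * Zpart S g g)%E.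
Proof.
move=> eps0 g2pi; have pi0 := @pi_gt0 R; have g0 : 0 < g by lra.
have g'g : 0 < g - 4 * pi ^+ 2 / g by rewrite subr_gt0 ltr_pdivrMr //; nra.
rewrite -[X in (_ <= _ + _ * X)%E](Zpart_modularE g0 g0).
apply: le_trans (Zpart_split_le (Q := [set p | p.1 + p.2 <= cc S / 12 + eps])
  (a := 4 * pi ^+ 2 / g) (b := 4 * pi ^+ 2 / g)
  (expR_ge0 (- eps * (g - 4 * pi ^+ 2 / g))) _) _.
  move=> p _ /negP; rewrite -ltNge => heavy.
  rewrite !Zterm_diag mulrCA -expRD ler_wpM2l // ler_expR.
  set x := p.1 + p.2 - cc S / 12.
  have x_eps : 0 <= x - eps by rewrite /x; lra.
  have := mulr_ge0 x_eps (ltW g'g).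
  lra.
apply: leeD => //; apply: le_trans (esumZl_le _ (expR_ge0 _) _) => [|p]; last first.
  by rewrite lee_fin mulr_ge0 ?expR_ge0.
apply: le_esum => p _; rewrite ZtermE EFinM.
by have -> : - p.1 * g - p.2 * g = - (p.1 + p.2) * g by ring.
Qed.

Definition hks_factor (eps g : R) : R :=
  (1 - expR (- eps * (g - 4 * pi ^+ 2 / g)))^-1.

Lemma Zpart_diag_le eps g (a : R) : 0 < eps -> 2 * pi < g ->
    (light_sum S eps g <= a%:E)%E ->
  (Zpart S g g <= (expR (cc S / 24 * (g + g)) * (a * hks_factor eps g))%:E)%E.
Proof.
move=> eps0 g2pi light; have pi0 := @pi_gt0 R; have g0 : 0 < g by lra.
have k1 : expR (- eps * (g - 4 * pi ^+ 2 / g)) < 1.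
  by rewrite expR_lt1 mulNr oppr_lt0 mulr_gt0 // subr_gt0 ltr_pdivrMr //; nra.
have := Zpart_le_light eps0 g2pi; rewrite -(fineK (Zpart_fin_num g0 g0)).
set z := fine _; set k := expR (- eps * _); set E := expR (cc S / 24 * _) => hz.
have : (z%:E <= (E * a + k * z)%:E)%E.
  apply: le_trans hz _; rewrite EFinD !EFinM; apply: leeD => //.
  by apply: lee_wpmul2l => //; rewrite lee_fin expR_ge0.
rewrite !lee_fin /hks_factor -/k mulrA ler_pdivlMr ?subr_gt0 //; lra.
Qed.

Variable B : R -> R -> R.
Hypothesis twistB : forall u v, 0 < u -> 0 < v -> 4 * pi ^+ 2 < u * v ->
  (twist_sum S u v <= (B u v)%:E)%E.

Lemma Zpart_le_twist_bound u v a b : above (4 * pi ^+ 2) (u, v) -> 0 < a -> 0 < b ->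
    4 * pi ^+ 2 / a <= u -> 4 * pi ^+ 2 / b <= v ->
  (Zpart S u v <= (expR (cc S / 24 * (u + v)) * B u v)%:E + Zpart S a b)%E.
Proof.
case=> /= u0 v0 uv a0 b0 au bv; apply: le_trans (Zpart_le_twist a0 b0 au bv) _.
apply: leeD => //; rewrite EFinM; apply: lee_wpmul2l; first by rewrite lee_fin expR_ge0.
exact: twistB.
Qed.

Local Notation rb := (rebalance (4 * pi ^+ 2)).

Lemma Zpart_iter_rebalance_le P n : above (4 * pi ^+ 2) P ->
  (Zpart S P.1 P.2 <= (expR (cc S / 24 * (P.1 + P.2)) *
      \sum_(i < n) B (iter i rb P).1 (iter i rb P).2)%:E
    + Zpart S (iter n rb P).1 (iter n rb P).2)%E.
Proof.
move=> hP; elim: n => [|n IH]; first by rewrite big_ord0 mulr0 add0e.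
apply: le_trans IH _; set E := expR _.
rewrite big_ord_recr /= mulrDr EFinD -addeA; apply: leeD => //.
have hn := iter_rebalance_above (four_pi2_gt0 R) n hP.
have [[a0 b0 _] d1 d2] := rebalance_above (four_pi2_gt0 R) hn.
by rewrite /E -(iter_rebalance_sum (4 * pi ^+ 2) P n); apply: Zpart_le_twist_bound.
Qed.

Variables (eps : R) (A : R -> R).
Hypothesis eps_gt0 : 0 < eps.
Hypothesis lightA :
  forall beta, 2 * pi < beta -> (light_sum S eps beta <= (A beta)%:E)%E.

Lemma Zpart_le_balanced P N :
    above (4 * pi ^+ 2) P -> balanced (4 * pi ^+ 2) (iter N rb P) ->
  (Zpart S P.1 P.2 <= (expR (cc S / 24 * (P.1 + P.2)) *
      (\sum_(i < N.+1) B (iter i rb P).1 (iter i rb P).2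
       + A ((P.1 + P.2) / 2) * hks_factor eps ((P.1 + P.2) / 2)))%:E)%E.
Proof.
move=> hP balN; set g := (P.1 + P.2) / 2.
have hN := iter_rebalance_above (four_pi2_gt0 R) N hP.
have [gg d1 d2] := balanced_half_sum hN balN.
rewrite iter_rebalance_sum -/g in gg d1 d2.
have pi0 := @pi_gt0 R; have g0 : 0 < g by case: hP => u0 v0 _; rewrite divr_gt0 ?addr_gt0.
have g2pi : 2 * pi < g by rewrite ltNge; apply/negP => h; nra.
apply: le_trans (Zpart_iter_rebalance_le N hP) _; set E := expR _.
rewrite big_ord_recr /= !mulrDr !EFinD -addeA; apply: leeD => //.
apply: le_trans (Zpart_le_twist_bound hN g0 g0 d1 d2) _; rewrite iter_rebalance_sum -/E.
have sg : P.1 + P.2 = g + g by rewrite /g; field.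
by apply: leeD => //; rewrite /E sg; apply: Zpart_diag_le => //; exact: lightA.
Qed.
End Partition.

Lemma logZ_above_bound (R : realType) (eps : R) (A : R -> R) (B : R -> R -> R)
    (P : R * R) : 0 < eps -> above (4 * pi ^+ 2) P ->
  exists K : R, forall S : spectrum R,
    is_CFT_spectrum S -> has_vacuum S ->
    (forall beta, 2 * pi < beta -> (light_sum S eps beta <= (A beta)%:E)%E) ->
    (forall u v, 0 < u -> 0 < v -> 4 * pi ^+ 2 < u * v ->
        (twist_sum S u v <= (B u v)%:E)%E) ->
    `| logZ S P.1 P.2 - cc S / 24 * (P.1 + P.2) | <= K.
Proof.
move=> eps0 hP; have [N balN] := rebalance_eventually_balanced (four_pi2_gt0 R) hP.
eexists => S HS vac lightA twistB; have [u0 v0 _] := hP.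
apply: abs_ln_sub_le; rewrite -lee_fin fineK ?Zpart_fin_num //.
  exact: Zpart_ge_vacuum.
exact: (Zpart_le_balanced HS twistB eps0 lightA hP balN).
Qed.

Theorem mainTheorem6 (R : realType) (eps : R) (A : R -> R) (B : R -> R -> R) :
  0 < eps ->
  (forall beta, 2 * pi < beta -> 0 <= A beta) ->
  (forall bL bR, 0 < bL -> 0 < bR -> 4 * pi ^+ 2 < bL * bR -> 0 <= B bL bR) ->
  forall bL bR : R, 0 < bL -> 0 < bR -> bL * bR != 4 * pi ^+ 2 ->
  exists K : R, forall S : spectrum R,
    is_CFT_spectrum S -> has_vacuum S ->
    (forall beta, 2 * pi < beta -> (light_sum S eps beta <= (A beta)%:E)%E) ->
    (forall bL' bR', 0 < bL' -> 0 < bR' -> 4 * pi ^+ 2 < bL' * bR' ->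
        (twist_sum S bL' bR' <= (B bL' bR')%:E)%E) ->
    (4 * pi ^+ 2 < bL * bR ->
       `| logZ S bL bR - cc S / 24 * (bL + bR) | <= K) /\
    (bL * bR < 4 * pi ^+ 2 ->
       `| logZ S bL bR - pi ^+ 2 * cc S / 6 * (bL^-1 + bR^-1) | <= K).
Proof.
move=> eps0 _ _ bL bR bL0 bR0; rewrite neq_lt => /orP[btz|ads].
  have c4 := four_pi2_gt0 R.
  have hP : above (4 * pi ^+ 2) (4 * pi ^+ 2 / bL, 4 * pi ^+ 2 / bR).
    split; rewrite /= ?divr_gt0 // mulf_div ltr_pdivlMr ?mulr_gt0 //.
    by rewrite ltr_pM2l.
  have [K HK] := logZ_above_bound A B eps0 hP.
  exists K => S HS vac lightA twistB; split => [ads | _].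
    by have := lt_trans ads btz; rewrite ltxx.
  have -> : pi ^+ 2 * cc S / 6 * (bL^-1 + bR^-1) =
            cc S / 24 * (4 * pi ^+ 2 / bL + 4 * pi ^+ 2 / bR) by lra.
  by have := HK S HS vac lightA twistB; rewrite /logZ /= Zpart_modularE.
have [K HK] := logZ_above_bound A B eps0 (And3 bL0 bR0 ads : above _ (bL, bR)).
exists K => S HS vac lightA twistB; split => [_ | btz].
  exact: (HK S HS vac lightA twistB).
by have := lt_trans ads btz; rewrite ltxx.
Qed.
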